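(* For every $n\ge1$, $m_{\mathsf{faithful}}\big(\mathrm{Aff}(\mathcal{O}/\mathfrak{p}^n)\big)=q^n-q^{n-1}$.
   Context: For a finite group $G$, $m_{\mathsf{faithful}}(G)$ denotes the smallest dimension of a faithful complex representation of $G$. $F$ is a non-Archimedean local field with ring of integers $\mathcal{O}$, maximal ideal $\mathfrak{p}$, and residue field of size $q$. For a commutative ring $R$, $\mathrm{Aff}(R)=R\rtimes R^\times$, where the unit group $R^\times$ acts on the additive group $(R,+)$ by multiplication. *)

From HB Require Import structures.
From mathcomp Require Import all_boot all_order all_algebra all_fingroup all_solvable all_field all_character.
Set Implicit Arguments. Unset Strict Implicit. Unset Printing Implicit Defensive.
Import Order.TTheory GRing.Theory Num.Theory.

(* Aff(R) = R ⋊ R^x, with R^x acting on (R,+) by multiplication: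
   (a,u) * (b,v) = (a + u b, u v). *)
Section Aff.
Variable R : finComUnitRingType.

Definition aff_type : Type := (R * {unit R})%type.
HB.instance Definition _ := Finite.on aff_type.

Local Open Scope ring_scope.

Definition aff_mul (x y : aff_type) : aff_type :=
  (x.1 + val x.2 * y.1, (x.2 * y.2)%g).
Definition aff_one : aff_type := (0, 1%g).
Definition aff_inv (x : aff_type) : aff_type :=
  (- (val (x.2^-1)%g * x.1), (x.2^-1)%g).

Lemma aff_mulA : associative aff_mul.
Proof.
move=> [a u] [b v] [c w]; rewrite /aff_mul /=; congr (_, _); last by rewrite mulgA.
by rewrite mulrDr addrA mulrA.
Qed.

Lemma aff_mul1 : left_id aff_one aff_mul.
Proof.
move=> [a u]; rewrite /aff_mul /aff_one /= mul1g; congr (_, _).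
by rewrite add0r; apply: mul1r.
Qed.

Lemma aff_mulV : left_inverse aff_one aff_inv aff_mul.
Proof.
move=> [a u]; rewrite /aff_mul /aff_inv /aff_one /=; congr (_, _); last by rewrite mulVg.
by rewrite addNr.
Qed.

HB.instance Definition _ := Finite_isGroup.Build aff_type aff_mulA aff_mul1 aff_mulV.
End Aff.

Definition Aff (R : finComUnitRingType) : {group aff_type R} := [set: aff_type R]%G.

(* G has a faithful complex representation of dimension d
   (complex numbers rendered as algC, the algebraic closure of Q in C). *)
Definition has_faithful_rep (gT : finGroupType) (G : {group gT}) (d : nat) : Prop :=
  exists rG : mx_representation algC G d, mx_faithful rG.

Definition m_faithful_is (gT : finGroupType) (G : {group gT}) (m : nat) : Prop :=
  has_faithful_rep G m /\ forall d, has_faithful_rep G d -> (m <= d)%N.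

From mathcomp Require Import all_boot all_algebra all_fingroup all_field all_character.
From mathcomp Require Import ring.
Set Implicit Arguments. Unset Strict Implicit. Unset Printing Implicit Defensive.
Import GRing.Theory Num.Theory.
Local Open Scope ring_scope.

(* Let N = (R, +) be the translation subgroup of G = Aff(R), R = O/p^n, and let
   z = pi^(n-1), which lies in every nonzero ideal of R.  A faithful
   representation of G restricted to N has a linear constituent chi with
   chi(z) != 1; its conjugates a |-> chi(u a) by the units u are constituents as
   well, and they are pairwise distinct, so the degree is at least |R^x|.
   Conversely Ind_N^G chi has degree |G : N| = |R^x|, and it is faithful because
   R is local, so that every element of R is a sum of units.  Finally
   |R^x| = |R| - |p/p^n| = q^n - q^(n-1). *)

Section CharacterFacts.
Variables (gT : finGroupType) (G : {group gT}).

Lemma constt_notin_cfker (chi : 'CF(G)) x :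
  chi \is a character -> x \in G -> x \notin cfker chi ->
  exists2 i, i \in irr_constt chi & x \notin cfker 'chi_i.
Proof.
move=> Nchi Gx xK.
have /exists_inP[i Ci iK] :
    [exists (i | i \in irr_constt chi), x \notin cfker 'chi_i].
  apply: contraR xK => /exists_inPn xKi; rewrite cfkerE // inE Gx.
  by apply/bigcapP => i Ci; apply/negbNE/xKi.
by exists i.
Qed.

Lemma card_irr_constt_le (chi : 'CF(G)) :
  chi \is a character -> #|irr_constt chi|%:R <= chi 1%g.
Proof.
move=> Nchi; rewrite {2}[chi]cfun_sum_constt sum_cfunE -sumr_const.
apply: ler_sum => i Ci; rewrite !cfunE.
have /natrP[m Em] := Cnat_cfdot_char_irr i Nchi.
have /natrP[e Ee] := Cnat_irr1 i.
move: Ci (irr1_neq0 i); rewrite irr_consttE Em Ee -natrM ler1n !pnatr_eq0.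
by rewrite muln_gt0 !lt0n => -> ->.
Qed.

Lemma constt_Res_conjg (H : {group gT}) (chi : 'CF(G)) j y :
  (H <| G)%g -> y \in G -> j \in irr_constt ('Res[H] chi) ->
  conjg_Iirr j y \in irr_constt ('Res[H] chi).
Proof.
move=> nsHG Gy; rewrite !irr_consttE conjg_IirrE -{2}(cfConjg_id chi Gy).
by rewrite -(cfConjgRes _ (normal_refl G) nsHG Gy) cfConjg_iso.
Qed.

End CharacterFacts.

Section AffineGroup.
Variable R : finComUnitRingType.
Local Notation A := (aff_type R).

Lemma aff_mulE (x y : A) : (x * y)%g = (x.1 + val x.2 * y.1, (x.2 * y.2)%g).
Proof. by []. Qed.

Lemma aff_invE (x : A) : (x^-1)%g = (- (val (x.2^-1)%g * x.1), (x.2^-1)%g).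
Proof. by []. Qed.

Definition transl (a : R) : A := (a, 1%g).
Definition dil (u : {unit R}) : A := (0, u).

Definition translations : {set A} := [set x : A | x.2 == 1%g].

Lemma translations_group_set : group_set translations.
Proof.
apply/group_setP; split; first by rewrite inE.
by move=> x y; rewrite !inE aff_mulE => /eqP-> /eqP->; rewrite mulg1.
Qed.
Canonical translations_group := Group translations_group_set.

Lemma mem_transl a : transl a \in translations.
Proof. by rewrite inE. Qed.

Lemma translationsP x : x \in translations -> x = transl x.1.
Proof. by rewrite inE; case: x => a u /= /eqP->. Qed.

Lemma translD a b : (transl a * transl b)%g = transl (a + b).
Proof. by rewrite aff_mulE /transl /= mul1r mulg1. Qed.

Lemma transl0 : transl 0 = 1%g.
Proof. by []. Qed.

Lemma transl_inj : injective transl.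
Proof. by move=> a b [->]. Qed.

Lemma transl_conjV_dil (u : {unit R}) b :
  (transl b ^ (dil u)^-1)%g = transl (val u * b).
Proof.
rewrite /conjg invgK !aff_invE !aff_mulE /= /transl mul1g mulgV.
by rewrite mulr0 oppr0 !mul1r add0r addr0.
Qed.

Lemma translations_abelian : abelian translations.
Proof.
apply/centsP=> x /translationsP-> y /translationsP->.
by rewrite /commute !translD addrC.
Qed.

Lemma translations_normal : (translations <| Aff R)%g.
Proof.
rewrite /normal subsetT; apply/normsP => g _; apply/setP=> x.
rewrite mem_conjg !inE /conjg invgK !aff_mulE /=.
by have := conjg_eq1 x.2 (g.2^-1); rewrite /conjg invgK.
Qed.

Lemma card_translations : #|translations| = #|R|.
Proof.
have -> : translations = [set transl a | a in R].
  apply/setP=> x; apply/idP/imsetP => [/translationsP-> | [a _ ->]].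
    by exists x.1.
  exact: mem_transl.
by rewrite card_imset //; apply: transl_inj.
Qed.

Lemma index_translations : #|Aff R : translations|%g = #|[set: {unit R}]|.
Proof.
have cardA : #|Aff R| = (#|R| * #|[set: {unit R}]|)%N.
  by rewrite !cardsT; apply: card_prod.
have R_gt0 : (0 < #|R|)%N by apply/card_gt0P; exists 0.
apply/eqP; rewrite -(eqn_pmul2l R_gt0) -{1}card_translations.
by rewrite (Lagrange (subsetT translations_group)) cardA.
Qed.

Lemma translations_lin_char (i : Iirr translations) : 'chi_i \is a linear_char.
Proof. exact: char_abelianP translations_abelian i. Qed.

End AffineGroup.

Section TranslationCharacter.
Variable R : finComUnitRingType.
Local Notation N := (translations_group R).

Definition transl_char (i : Iirr N) (a : R) : algC := 'chi_i (transl a).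

Lemma transl_charD i a b :
  transl_char i (a + b) = transl_char i a * transl_char i b.
Proof.
by rewrite /transl_char -translD lin_charM ?translations_lin_char ?mem_transl.
Qed.

Lemma transl_char_neq0 i a : transl_char i a != 0.
Proof. by rewrite lin_char_neq0 ?translations_lin_char ?mem_transl. Qed.

Lemma transl_char_cfkerE i a :
  (transl a \in cfker 'chi_i) = (transl_char i a == 1).
Proof. by rewrite cfkerEirr inE lin_char1 ?translations_lin_char. Qed.

Lemma transl_char_conjg i (u : {unit R}) b :
  transl_char (conjg_Iirr i (dil u)) b = transl_char i (val u * b).
Proof.
have nNu : dil u \in 'N(N)%g.
  by rewrite (subsetP (normal_norm (translations_normal R))) ?inE.
by rewrite /transl_char conjg_IirrE cfConjgE // transl_conjV_dil.
Qed.

Variable z : R.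
Hypothesis dvd_z : forall a : R, a != 0 -> exists c, z = a * c.
Variable i : Iirr N.
Hypothesis chi_z : transl_char i z != 1.

Lemma transl_char_ann a : (forall b, transl_char i (a * b) = 1) -> a = 0.
Proof.
by move=> ann; apply/eqP; apply: contraNT chi_z => /dvd_z[c ->]; rewrite ann.
Qed.

Lemma conjg_dil_inj : injective (fun u => conjg_Iirr i (dil u)).
Proof.
move=> u w /= eq_uw; apply/val_inj/eqP; rewrite -subr_eq0; apply/eqP.
apply: transl_char_ann => b; apply: (mulIf (transl_char_neq0 i (val w * b))).
rewrite mul1r -transl_charD mulrBl subrK -!transl_char_conjg.
by rewrite eq_uw.
Qed.

Hypothesis local : forall r : R, r \is a GRing.unit \/ r - 1 \is a GRing.unit.

(* Locality makes every element a sum of at most two units. *)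
Lemma transl_char_unit_ann a :
  (forall w : {unit R}, transl_char i (val w * a) = 1) -> a = 0.
Proof.
move=> ann; apply: transl_char_ann => b; have [Ub | Ub1] := local b.
  by rewrite mulrC (ann (FinRing.Unit Ub)).
rewrite -(subrK 1 b) mulrDr mulr1 transl_charD [a * _]mulrC.
by rewrite (ann (FinRing.Unit Ub1)) -{1}(mul1r a) (ann 1%g) mulr1.
Qed.

End TranslationCharacter.

Section FaithfulDegree.
Variables (R : finComUnitRingType) (z : R).
Hypothesis z_neq0 : z != 0.
Hypothesis dvd_z : forall a : R, a != 0 -> exists c, z = a * c.
Local Notation N := (translations_group R).
Local Notation U := [set: {unit R}].

Lemma faithful_constt_transl_char (chi : 'CF(N)) :
  chi \is a character -> cfaithful chi ->
  exists2 i, i \in irr_constt chi & transl_char i z != 1.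
Proof.
move=> Nchi faith; have zK : transl z \notin cfker chi.
  apply: contra z_neq0 => /(subsetP faith)/set1P.
  by rewrite -transl0 => /transl_inj->.
have [i Ci] := constt_notin_cfker Nchi (mem_transl z) zK.
by rewrite transl_char_cfkerE; exists i.
Qed.

Lemma Aff_faithful_rep_ge d (rG : mx_representation algC (Aff R) d) :
  mx_faithful rG -> (#|U| <= d)%N.
Proof.
move=> ffG; pose chi := 'Res[N] (cfRepr rG).
have Nchi : chi \is a character by rewrite cfRes_char ?cfRepr_char.
have [i Ci chi_z] : exists2 i, i \in irr_constt chi & transl_char i z != 1.
  apply: faithful_constt_transl_char => //.
  rewrite /cfaithful cfker_Res ?subsetT ?cfRepr_char // cfker_repr.
  by apply/subIset/orP; right.
have sUchi : [set conjg_Iirr i (dil u) | u in U] \subset irr_constt chi.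
  apply/subsetP=> _ /imsetP[u _ ->].
  exact: constt_Res_conjg (translations_normal R) (in_setT _) Ci.
have := card_irr_constt_le Nchi; rewrite cfRes1 cfRepr1 ler_nat.
apply: leq_trans; rewrite -(card_imset _ (conjg_dil_inj dvd_z chi_z)).
exact: subset_leq_card.
Qed.

Hypothesis local : forall r : R, r \is a GRing.unit \/ r - 1 \is a GRing.unit.

(* Ind_N^G chi_i is faithful: its kernel is the core of ker chi_i, which is
   trivial by [transl_char_unit_ann]. *)
Lemma Aff_has_faithful_rep : has_faithful_rep (Aff R) #|U|.
Proof.
have [i _ chi_z] : exists2 i, i \in irr_constt (cfReg N) & transl_char i z != 1.
  exact: faithful_constt_transl_char (cfReg_char N) (cfaithful_reg N).
have /char_reprP[[d rG] chiE] := cfInd_char (Aff R) (irr_char i).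
have dE : d = #|U|.
  apply/eqP; rewrite -(eqr_nat algC) -(cfRepr1 rG) -chiE cfInd1 ?subsetT //.
  by rewrite index_translations lin_char1 ?translations_lin_char ?mulr1.
rewrite -dE; exists rG; rewrite /mx_faithful -cfker_repr -chiE.
rewrite cfker_Ind_irr ?subsetT //; apply/subsetP=> x /bigcapP core_x.
have xN : x \in translations R.
  by have := core_x 1%g (group1 _); rewrite conjsg1; apply: (subsetP (cfker_sub _)).
apply/set1P; rewrite (translationsP xN) -transl0; congr transl.
apply: (transl_char_unit_ann dvd_z chi_z local) => w.
apply/eqP; rewrite -transl_char_cfkerE -transl_conjV_dil -mem_conjg.
by rewrite -(translationsP xN) core_x ?in_setT.
Qed.

Lemma m_faithful_Aff : m_faithful_is (Aff R) #|U|.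
Proof.
split; first exact: Aff_has_faithful_rep.
by move=> d [rG /Aff_faithful_rep_ge].
Qed.

End FaithfulDegree.

Section QuotientOfDVR.
Variables (O : idomainType) (pi : O).
Hypothesis pi_nonunit : pi \isn't a GRing.unit.
Hypothesis pi_neq0 : pi != 0.
Hypothesis dvr : forall x : O, x != 0 ->
  exists (u : O) (e : nat), u \is a GRing.unit /\ x = u * pi ^+ e.
Variables (k : finFieldType) (res : {rmorphism O -> k}).
Hypothesis res_surj : forall c : k, exists x : O, res x = c.
Hypothesis res_ker : forall x : O, res x = 0 <-> exists y : O, x = pi * y.
Variables (m : nat) (R : finComUnitRingType) (f : {rmorphism O -> R}).
Hypothesis f_surj : forall r : R, exists x : O, f x = r.
Hypothesis f_ker : forall x : O, f x = 0 <-> exists y : O, x = pi ^+ m.+1 * y.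

Lemma pi_mul_neq1 y : pi * y != 1.
Proof. by apply: contra pi_nonunit => /eqP pi_y; apply/unitrPr; exists y. Qed.

Lemma f_piX_neq0 : f (pi ^+ m) != 0.
Proof.
apply/eqP => /f_ker[y]; rewrite exprSr -mulrA -{1}(mulr1 (pi ^+ m)) => /eqP.
by rewrite (inj_eq (mulfI (expf_neq0 m pi_neq0))) eq_sym (negbTE (pi_mul_neq1 y)).
Qed.

Lemma dvd_f_piX a : a != 0 -> exists c, f (pi ^+ m) = a * c.
Proof.
move=> a_neq0; have [x fx] := f_surj a.
have x_neq0 : x != 0 by apply: contra a_neq0 => /eqP x0; rewrite -fx x0 rmorph0.
have [u [e [Uu Ex]]] := dvr x_neq0.
have le_em : (e <= m)%N.
  rewrite leqNgt; apply: contra a_neq0 => lt_me.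
  rewrite -fx; apply/eqP/f_ker; exists (u * pi ^+ (e - m.+1)).
  by rewrite Ex mulrCA -exprD subnKC.
exists (f (u^-1 * pi ^+ (m - e))).
by rewrite -fx -rmorphM Ex mulrACA divrr // mul1r -exprD subnKC.
Qed.

Definition pideal (j : nat) : {set R} := [set f pi ^+ j * t | t : R].

Lemma pidealP j x : reflect (exists y, x = f (pi ^+ j * y)) (x \in pideal j).
Proof.
apply: (iffP imsetP) => [[t _ ->] | [y ->]].
  by have [y <-] := f_surj t; exists y; rewrite rmorphM rmorphXn.
by exists (f y); rewrite ?inE // rmorphM rmorphXn.
Qed.

Lemma pidealB j : {in pideal j &, forall x y, x - y \in pideal j}.
Proof.
move=> _ _ /imsetP[t _ ->] /imsetP[t' _ ->].
by rewrite -mulrBr; apply: imset_f.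
Qed.

Lemma pideal0 : pideal 0 = [set: R].
Proof.
apply/setP => x; rewrite in_setT; apply/pidealP.
by have [y <-] := f_surj x; exists y; rewrite expr0 mul1r.
Qed.

Lemma pideal_top : pideal m.+1 = [set 0].
Proof.
apply/setP => x; apply/pidealP/set1P => [[y ->] | ->].
  by apply/f_ker; exists y.
by exists 0; rewrite mulr0 rmorph0.
Qed.

Lemma res_eq0_of_pideal j y :
  (j <= m)%N -> f (pi ^+ j * y) \in pideal j.+1 -> res y = 0.
Proof.
move=> le_jm /pidealP[w /eqP]; rewrite -subr_eq0 -rmorphB exprSr -mulrA -mulrBr.
move=> /eqP/f_ker[v]; rewrite -(subnKC (leqW le_jm)) exprD -mulrA.
move=> /(mulfI (expf_neq0 j pi_neq0)) Ey; apply/res_ker.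
exists (w + pi ^+ (m - j) * v).
by rewrite mulrDr mulrA -exprS -subSn // -Ey addrC subrK.
Qed.

(* With s a section of res, (c, t) |-> f (pi^j s(c)) + t maps k * p^(j+1)
   bijectively onto p^j. *)
Lemma card_pideal_step j : (j <= m)%N -> #|pideal j| = (#|k| * #|pideal j.+1|)%N.
Proof.
move=> le_jm.
have lift c : exists x, res x == c by have [x <-] := res_surj c; exists x.
pose s c := xchoose (lift c).
have sK c : res (s c) = c := eqP (xchooseP (lift c)).
pose h (p : k * R) := f (pi ^+ j * s p.1) + p.2.
have -> : pideal j = h @: setX [set: k] (pideal j.+1).
  apply/setP => x; apply/pidealP/imsetP => [[y ->] | [[c t]]].
    have /res_ker[y' Ey'] : res (y - s (res y)) = 0 by rewrite rmorphB sK subrr.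
    exists (res y, f (pi ^+ j.+1 * y')).
      by apply/setXP; split; last by apply/pidealP; exists y'.
    by rewrite /h /= -rmorphD exprSr -mulrA -mulrDr -Ey' addrC subrK.
  case/setXP => _ /pidealP[y ->] ->.
  by exists (s c + pi * y); rewrite /h /= -rmorphD mulrDr exprSr mulrA.
rewrite card_in_imset ?cardsX ?cardsT // => -[c t] [c' t'] /setXP[_ It].
case/setXP=> _ It'; rewrite /h /= => E.
have Ec : c = c'.
  rewrite -(sK c) -(sK c'); apply/eqP; rewrite -subr_eq0 -rmorphB; apply/eqP.
  apply: (res_eq0_of_pideal le_jm); rewrite mulrBr rmorphB.
  have -> : f (pi ^+ j * s c) - f (pi ^+ j * s c') = t' - t.
    by rewrite -(addrK t (f (pi ^+ j * s c))) E; ring.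
  exact: pidealB.
by move: E; rewrite Ec => /addrI->.
Qed.

Lemma card_pideal i : (i <= m.+1)%N -> #|pideal (m.+1 - i)| = (#|k| ^ i)%N.
Proof.
elim: i => [|i IH] le_im; first by rewrite subn0 pideal_top cards1.
rewrite card_pideal_step; last by rewrite subnS -ltnS prednK ?subn_gt0 ?leq_subr.
by rewrite subnSK // IH ?(ltnW le_im) // expnS.
Qed.

Lemma unit_pidealE (x : R) : (x \is a GRing.unit) = (x \notin pideal 1).
Proof.
apply/idP/idP => [Ux | x_notin].
  apply: contraL Ux => /pidealP[y ->]; rewrite rmorphM unitrM negb_and.
  apply/orP; left; apply/negP => /unitrPr[v]; have [y' <-] := f_surj v.
  rewrite expr1 -rmorphM -(rmorph1 f) => /eqP; rewrite -subr_eq0 -rmorphB.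
  move=> /eqP/f_ker[w Ew]; have := pi_mul_neq1 (y' - pi ^+ m * w).
  by rewrite mulrBr mulrA -exprS -Ew opprB addrC subrK eqxx.
move: x_notin; have [x0 <-] := f_surj x; apply: contraR => f_nonunit.
have [-> | x0_neq0] := eqVneq x0 0.
  by apply/pidealP; exists 0; rewrite !mulr0.
have [u [[|e] [Uu Ex0]]] := dvr x0_neq0.
  by move: f_nonunit; rewrite Ex0 expr0 mulr1 rmorph_unit.
by apply/pidealP; exists (u * pi ^+ e); rewrite Ex0 expr1 mulrCA -exprS.
Qed.

Lemma quotient_local (r : R) : r \is a GRing.unit \/ r - 1 \is a GRing.unit.
Proof.
rewrite !unit_pidealE; apply/orP; rewrite -negb_and; apply/andP => -[r_in r1_in].
have := pidealB r_in r1_in; rewrite opprB addrC subrK; apply/negP.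
by rewrite -unit_pidealE unitr1.
Qed.

Lemma card_units : #|[set: {unit R}]| = (#|k| ^ m.+1 - #|k| ^ m)%N.
Proof.
have cardR : #|R| = (#|k| ^ m.+1)%N.
  by rewrite -cardsT -pideal0 -(subnn m.+1) card_pideal.
have card_p : #|pideal 1| = (#|k| ^ m)%N by rewrite -(card_pideal (leqnSn m)) subSnn.
rewrite cardsT card_sub -cardR -card_p (cardsCs (pideal 1)) subKn ?max_card //.
by apply: eq_card => x; rewrite inE unit_pidealE !inE.
Qed.

End QuotientOfDVR.

Theorem theorem1p5
  (O : idomainType) (pi : O)
  (pi_nonunit : pi \isn't a GRing.unit) (pi_neq0 : pi != 0)
  (dvr : forall x : O, x != 0 ->
           exists (u : O) (e : nat), u \is a GRing.unit /\ x = u * pi ^+ e)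
  (k : finFieldType) (res : {rmorphism O -> k})
  (res_surj : forall z : k, exists x : O, res x = z)
  (res_ker : forall x : O, res x = 0 <-> exists y : O, x = pi * y)
  (n : nat) (n_ge1 : (1 <= n)%N)
  (R : finComUnitRingType) (f : {rmorphism O -> R})
  (f_surj : forall z : R, exists x : O, f x = z)
  (f_ker : forall x : O, f x = 0 <-> exists y : O, x = pi ^+ n * y) :
  m_faithful_is (Aff R) (#|k| ^ n - #|k| ^ n.-1)%N.
Proof.
case: n => [//|m] in n_ge1 f_ker *.
rewrite -(card_units pi_nonunit pi_neq0 dvr res_surj res_ker f_surj f_ker).
apply: (m_faithful_Aff (f_piX_neq0 pi_nonunit pi_neq0 f_ker)).
  by move=> a; exact: (dvd_f_piX dvr f_surj f_ker).
exact: (quotient_local pi_nonunit dvr f_surj f_ker).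
Qed.
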